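(* Let $\mathbb{F}$ be a field and $\mathcal{H}=(Q_0,Q_1,\beta)$ a directed tensor-labeled hypergraph. Suppose there exist $r\ge1$, distinct elements $w_0,w_1,\dots,w_r\in V_{\mathrm{macro}}$ and distinct hyperedges $e_1,\dots,e_r\in Q_1$ with $\beta(\mathbf{1}_{e_i})=(w_0,w_i)$ for $i=1,\dots,r$. If there is $(\alpha_1,\dots,\alpha_r)\in\mathbb{F}^r\setminus\{0\}$ with $\sum_{i=1}^r\alpha_i(w_i-w_0)=0$ in $T(\mathbb{F}^{Q_0})$, then $\xi:=\sum_i\alpha_i\mathbf{1}_{e_i}$ satisfies $\partial_\beta(\xi)=0$ and $B_{\mathrm{macro}}(\xi)\in(\mathrm{Im}(B_{\mathrm{macro}})\cap\mathrm{Ker}(\hat\phi))\setminus\{0\}$. In particular $\delta(\mathcal{H})\ge1$.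
   Context: $T(\mathbb{F}^{Q_0})=\bigoplus_{k\ge0}(\mathbb{F}^{Q_0})^{\otimes k}$. A directed tensor-labeled hypergraph is $\mathcal{H}=(Q_0,Q_1,\beta)$ ($Q_0,Q_1$ finite) with $\beta:\mathbb{F}^{Q_1}\to T(\mathbb{F}^{Q_0})\times T(\mathbb{F}^{Q_0})$ linear, $\beta(\mathbf{1}_e)=(A_e,B_e)$. $\partial_\beta:\mathbf{1}_e\mapsto B_e-A_e$. $V_{\mathrm{macro}}=\{A_e\}\cup\{B_e\}$; $B_{\mathrm{macro}}:\mathbb{F}^{Q_1}\to\mathbb{F}^{V_{\mathrm{macro}}}$, $\mathbf{1}_e\mapsto\mathbf{1}_{B_e}-\mathbf{1}_{A_e}$; $\hat\phi:\mathbb{F}^{V_{\mathrm{macro}}}\to T(\mathbb{F}^{Q_0})$, $\mathbf{1}_w\mapsto w$; $\delta(\mathcal{H})=\dim(\mathrm{Im}B_{\mathrm{macro}}\cap\mathrm{Ker}\hat\phi)$. *)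

From HB Require Import structures.
From mathcomp Require Import all_boot all_order all_algebra.
From mathcomp Require Import finmap.
From mathcomp Require Import monalg.
From mathcomp Require Import boolp.

Set Implicit Arguments.
Unset Strict Implicit.
Unset Printing Implicit Defensive.

Import GRing.Theory.
Local Open Scope ring_scope.
Local Open Scope fset_scope.

(* T(F^{Q0}) = (+)_{k>=0} (F^{Q0})^{(x)k}, realized as the F-vector space
   with basis the words (seq Q0) over Q0:  the word [:: q1; ...; qk]
   stands for the basis tensor 1_{q1} (x) ... (x) 1_{qk}. *)
Definition tensor_alg (F : fieldType) (Q0 : finType) := {malg F[seq Q0]}.

Section Hypergraph.
Variables (F : fieldType) (Q0 Q1 : finType).
(* beta(1_e) = (A e, B e); beta is the linear extension. *)
Variables (A B : Q1 -> tensor_alg F Q0).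

Definition indic (e : Q1) : {ffun Q1 -> F} := [ffun q => (q == e)%:R].

Definition beta (xi : {ffun Q1 -> F}) : tensor_alg F Q0 * tensor_alg F Q0 :=
  (\sum_q xi q *: A q, \sum_q xi q *: B q).

Definition partial_beta (xi : {ffun Q1 -> F}) : tensor_alg F Q0 :=
  \sum_q xi q *: (B q - A q).

Definition Vmacro : {fset tensor_alg F Q0} :=
  [fset A e | e in Q1] `|` [fset B e | e in Q1].

Definition Bmacro (xi : {ffun Q1 -> F}) : {ffun Vmacro -> F} :=
  [ffun v : Vmacro => \sum_q xi q * ((val v == B q)%:R - (val v == A q)%:R)].

Definition phihat (f : {ffun Vmacro -> F}) : tensor_alg F Q0 :=
  \sum_(v : Vmacro) f v *: val v.

Definition in_Im_cap_Ker (f : {ffun Vmacro -> F}) : Prop :=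
  (exists xi, Bmacro xi = f) /\ phihat f = 0.

Definition lin_indep n (X : 'I_n -> {ffun Vmacro -> F}) : Prop :=
  forall c : 'I_n -> F,
    (forall v, \sum_i c i * X i v = 0) -> forall i, c i = 0.

(* delta(H) = dim (Im B_macro /\ Ker phi_hat): the maximal number of
   linearly independent vectors in that subspace of F^{V_macro}
   (which is at most #|V_macro|). *)
Definition delta : nat :=
  \max_(n < (#|` Vmacro|).+1 |
        `[< exists X : 'I_n -> {ffun Vmacro -> F},
              lin_indep X /\ forall i, in_Im_cap_Ker (X i) >]) n.
End Hypergraph.

From HB Require Import structures.
From mathcomp Require Import all_boot all_order all_algebra.
From mathcomp Require Import finmap monalg boolp.

(* The chain xi = sum_i alpha_i 1_{e_i} has B_macro xi = sum_i alpha_i (1_{w_i} - 1_{w_0}),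
   and phi_hat o B_macro = partial_beta, so phi_hat (B_macro xi) = sum_i alpha_i (w_i - w_0) = 0.
   Since the w_i are distinct, the coordinate of B_macro xi at w_i is alpha_i, which is nonzero
   for some i; a single nonzero vector of Im B_macro /\ Ker phi_hat then gives delta >= 1. *)

Set Implicit Arguments.
Unset Strict Implicit.
Unset Printing Implicit Defensive.

Import GRing.Theory.
Local Open Scope ring_scope.
Local Open Scope fset_scope.

Section IndicatorSums.
Variables (F : fieldType) (Q1 : finType) (V : lmodType F).

Lemma sum_indicZ (e0 : Q1) (f : Q1 -> V) : \sum_q indic F e0 q *: f q = f e0.
Proof.
rewrite (bigD1 e0) //= ffunE eqxx scale1r big1 ?addr0 // => q /negbTE q_neq.
by rewrite ffunE q_neq scale0r.
Qed.

Lemma sum_indic_combZ r (alpha : 'I_r -> F) (e : 'I_r -> Q1) (f : Q1 -> V) :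
  \sum_q [ffun q => \sum_i alpha i * indic F (e i) q] q *: f q
  = \sum_i alpha i *: f (e i).
Proof.
under eq_bigr => q _ do rewrite ffunE scaler_suml.
rewrite exchange_big /=; apply: eq_bigr => i _.
under eq_bigr => q _ do rewrite -scalerA.
by rewrite -scaler_sumr sum_indicZ.
Qed.

End IndicatorSums.

Lemma sum_fset_eqZ (F : fieldType) (V : lmodType F) (S : {fset V}) (x : V) :
  x \in S -> \sum_(v : S) ((val v == x)%:R : F) *: val v = x.
Proof.
move=> xS; rewrite (bigD1 [` xS]) //= eqxx scale1r big1 ?addr0 // => v v_neq.
suff /negbTE -> : val v != x by rewrite scale0r.
by apply: contra v_neq => /eqP vx; apply/eqP/val_inj.
Qed.

Section Hypergraph.
Variables (F : fieldType) (Q0 Q1 : finType) (A B : Q1 -> tensor_alg F Q0).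

Lemma mem_Vmacro_A q : A q \in Vmacro A B.
Proof. by rewrite inE; apply/orP; left; apply/imfsetP; exists q. Qed.

Lemma mem_Vmacro_B q : B q \in Vmacro A B.
Proof. by rewrite inE; apply/orP; right; apply/imfsetP; exists q. Qed.

Lemma beta_indic q : beta A B (indic F q) = (A q, B q).
Proof. by rewrite /beta !sum_indicZ. Qed.

Lemma phihat_Bmacro xi : phihat (Bmacro A B xi) = partial_beta A B xi.
Proof.
rewrite /phihat /partial_beta.
under eq_bigr => v _ do rewrite ffunE scaler_suml.
rewrite exchange_big /=; apply: eq_bigr => q _.
under eq_bigr => v _ do rewrite -scalerA scalerBl.
by rewrite -scaler_sumr sumrB !sum_fset_eqZ ?mem_Vmacro_A ?mem_Vmacro_B.
Qed.

Lemma Bmacro_in_Im_cap_Ker xi :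
  partial_beta A B xi = 0 -> in_Im_cap_Ker (Bmacro A B xi).
Proof. by move=> cycle_xi; split; [exists xi | rewrite phihat_Bmacro]. Qed.

Lemma lin_indep1 (f : {ffun Vmacro A B -> F}) :
  f != 0 -> lin_indep (fun _ : 'I_1 => f).
Proof.
move=> f_neq0 c c_rel i; rewrite (ord1 i); apply/eqP; apply: contraNT f_neq0 => c0_neq0.
apply/eqP/ffunP => v; rewrite ffunE.
by move: (c_rel v); rewrite big_ord1 => /eqP; rewrite mulf_eq0 (negbTE c0_neq0) => /eqP.
Qed.

Lemma delta_gt0 (f : {ffun Vmacro A B -> F}) :
  in_Im_cap_Ker f -> f != 0 -> (0 < delta A B)%N.
Proof.
move=> f_IK f_neq0.
have [v _] : exists v : Vmacro A B, f v != 0.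
  apply/existsP; apply: contraNT f_neq0 => /existsPn f0.
  by apply/eqP/ffunP => v; rewrite ffunE; apply/eqP/negPn.
have one_lt : (1 < (#|` Vmacro A B|).+1)%N.
  by rewrite ltnS cardfs_gt0; apply/fset0Pn; exists (val v); exact: fsvalP.
apply: leq_trans (leq_bigmax_cond (Ordinal one_lt) _) => //.
by apply/asboolP; exists (fun _ => f); split=> [|_]; [exact: lin_indep1|].
Qed.

Section Star.
Variables (r : nat) (w : 'I_r.+1 -> tensor_alg F Q0) (e : 'I_r -> Q1) (alpha : 'I_r -> F).
Hypothesis w_inj : injective w.
Hypothesis A_star : forall i, A (e i) = w ord0.
Hypothesis B_star : forall i, B (e i) = w (lift ord0 i).

Let xi : {ffun Q1 -> F} := [ffun q => \sum_i alpha i * indic F (e i) q].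

Lemma partial_beta_star :
  partial_beta A B xi = \sum_i alpha i *: (w (lift ord0 i) - w ord0).
Proof. by rewrite /partial_beta sum_indic_combZ; under eq_bigr do rewrite A_star B_star. Qed.

Lemma Bmacro_star_leaf i0 (v : Vmacro A B) :
  val v = w (lift ord0 i0) -> Bmacro A B xi v = alpha i0.
Proof.
move=> v_leaf; rewrite ffunE (sum_indic_combZ (V := F^o)).
have leaf_neq_root : (val v == w ord0) = false.
  by rewrite v_leaf (inj_eq w_inj) eq_sym (negbTE (neq_lift _ _)).
rewrite (bigD1 i0) //= A_star B_star v_leaf eqxx -v_leaf leaf_neq_root subr0.
rewrite [_ *: _]mulr1 big1 ?addr0 // => i i_neq.
rewrite A_star B_star leaf_neq_root v_leaf (inj_eq w_inj) (inj_eq lift_inj).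
by rewrite eq_sym (negbTE i_neq) subrr [_ *: _]mulr0.
Qed.

Lemma Bmacro_star_neq0 : (exists i, alpha i != 0) -> Bmacro A B xi != 0.
Proof.
move=> [i0 alpha_neq0]; have leafV := mem_Vmacro_B (e i0); rewrite B_star in leafV.
apply: contra alpha_neq0 => /eqP xi0.
by rewrite -(Bmacro_star_leaf (v := [` leafV])) // xi0 ffunE.
Qed.

End Star.

End Hypergraph.

Theorem proposition4p7 (F : fieldType) (Q0 Q1 : finType)
    (A B : Q1 -> tensor_alg F Q0) (r : nat) (hr : (1 <= r)%N)
    (w : 'I_r.+1 -> tensor_alg F Q0) (e : 'I_r -> Q1)
    (hwV : forall j, w j \in Vmacro A B)
    (hw : injective w) (he : injective e)
    (hbeta : forall i, beta A B (indic F (e i)) = (w ord0, w (lift ord0 i)))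
    (alpha : 'I_r -> F) (halpha : exists i, alpha i != 0)
    (hrel : \sum_i alpha i *: (w (lift ord0 i) - w ord0) = 0) :
  let xi : {ffun Q1 -> F} := [ffun q => \sum_i alpha i * indic F (e i) q] in
  partial_beta A B xi = 0 /\
  in_Im_cap_Ker (Bmacro A B xi) /\ Bmacro A B xi != 0 /\
  (1 <= delta A B)%N.
Proof.
move=> xi.
have A_star i : A (e i) = w ord0 by have := hbeta i; rewrite beta_indic => -[].
have B_star i : B (e i) = w (lift ord0 i) by have := hbeta i; rewrite beta_indic => -[].
have cycle_xi : partial_beta A B xi = 0 by rewrite (partial_beta_star alpha A_star B_star).
have xi_IK := Bmacro_in_Im_cap_Ker cycle_xi.
have xi_neq0 := Bmacro_star_neq0 hw A_star B_star halpha.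
by do !split=> //; exact: delta_gt0 xi_IK xi_neq0.
Qed.
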